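(* Let $G$ be a nice connected graph of size $m$, and let $W$ be a closed walk of $G$ of length $p$ going through all vertices of $G$. Then ${\rm ML}^{\rm W}(G) \leq p+2m$.
   Context: All graphs are finite and simple. A walk of a graph $G$ is a sequence of vertices $u_0u_1\dots u_p$ with $u_tu_{t+1}\in E(G)$ for all $t$ (vertices and edges may repeat); its length is $p$; it is closed if $u_0=u_p$. For a walk $W$ of $G$, $G+W$ is the multigraph on $V(G)$ whose edge multiset consists of $E(G)$ together with each edge added as many times as $W$ traverses it. A multigraph is locally irregular if no two adjacent vertices have the same degree; a walk $W$ is irregularising if $G+W$ is locally irregular. A graph is nice if it is connected and not isomorphic to $K_2$. ${\rm ML}^{\rm W}(G)$ denotes the minimum length of an irregularising walk of $G$ (a walk of length $0$ is allowed). *)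

From mathcomp Require Import all_boot.
Set Implicit Arguments. Unset Strict Implicit. Unset Printing Implicit Defensive.

Definition simple_graph (T : finType) (e : rel T) : Prop :=
  symmetric e /\ irreflexive e.

(* number of edges (size) : each unordered edge appears twice as an ordered pair *)
Definition nedges (T : finType) (e : rel T) : nat :=
  #|[set x : T * T | e x.1 x.2]| %/ 2.

Definition connected_graph (T : finType) (e : rel T) : Prop :=
  forall x y : T, connect e x y.

Definition isK2 (T : finType) (e : rel T) : Prop :=
  #|T| = 2 /\ exists x y : T, e x y.

Definition nice (T : finType) (e : rel T) : Prop :=
  connected_graph e /\ ~ isK2 e.

(* A walk u0 u1 ... up is represented by its start u0 and the sequence
   s = [:: u1; ...; up]; it is a walk iff path e u0 s; its length is size s. *)
Definition is_walk (T : finType) (e : rel T) (u0 : T) (s : seq T) : bool :=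
  path e u0 s.

Definition walk_length (T : finType) (u0 : T) (s : seq T) : nat := size s.

Definition closed_walk (T : finType) (u0 : T) (s : seq T) : bool :=
  last u0 s == u0.

Definition covers_all (T : finType) (u0 : T) (s : seq T) : Prop :=
  forall v : T, v \in u0 :: s.

Definition walk_steps (T : finType) (u0 : T) (s : seq T) : seq (T * T) :=
  zip (u0 :: s) s.

Definition deg (T : finType) (e : rel T) (v : T) : nat := #|[set u | e v u]|.

(* degree of v in the multigraph G + W: deg_G v plus the number of
   traversals by W of edges incident to v (no loops since G is simple) *)
Definition deg_plus (T : finType) (e : rel T) (u0 : T) (s : seq T) (v : T) : nat :=
  deg e v + count (fun pr : T * T => (pr.1 == v) || (pr.2 == v)) (walk_steps u0 s).

(* G + W is locally irregular. Adjacency in G + W coincides with adjacency in G,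
   since W only traverses edges of G. *)
Definition irregularising (T : finType) (e : rel T) (u0 : T) (s : seq T) : Prop :=
  is_walk e u0 s /\
  forall x y : T, e x y -> deg_plus e u0 s x <> deg_plus e u0 s y.

Definition MLW_le (T : finType) (e : rel T) (k : nat) : Prop :=
  exists (u0 : T) (s : seq T), irregularising e u0 s /\ walk_length u0 s <= k.

From mathcomp Require Import all_boot zify.
Set Implicit Arguments. Unset Strict Implicit. Unset Printing Implicit Defensive.

(* Splice into W, for every vertex v, some number K v of detours v -> p v -> v
   along an edge to a parent p v: each detour costs 2 in length and adds 2 to the
   degrees of v and p v in G + W.  If every vertex precedes its parent in a fixed
   order, the degree of v no longer changes once v is processed, so K v can be
   chosen greedily, at most the number of earlier neighbours of v, to make the
   degree of v differ from all of theirs; that is at most m detours in total.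
   The last vertex r has no parent.  Ending the order with a cherry w - u - r
   (which exists because G is nice) with p w = u and p u = r repairs this: the
   detours at w also separate u from r, and the detours at u, which shift u and r
   alike, separate both from their other earlier neighbours. *)

Lemma count_mem_inj (T1 T2 : eqType) (f : T1 -> T2) (F : seq T2) (s : seq T1) :
  injective f -> uniq s -> count (fun k => f k \in F) s <= size F.
Proof.
move=> f_inj s_uniq; rewrite -size_filter -(size_map f).
apply: uniq_leq_size; first by rewrite map_inj_uniq // filter_uniq.
by move=> y /mapP[k]; rewrite mem_filter => /andP[fkF _] ->.
Qed.

Lemma exists_shift_avoiding (a b c : nat) (F1 F2 : seq nat) : 0 < c ->
  exists k, [/\ k <= size F1 + size F2, a + c * k \notin F1 & b + c * k \notin F2].
Proof.
move=> c_gt0; set N := (size F1 + size F2).+1.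
have shift_inj d : injective (fun k => d + c * k).
  by move=> x y /= /eqP; rewrite eqn_add2l eqn_pmul2l // => /eqP.
pose bad1 k := a + c * k \in F1; pose bad2 k := b + c * k \in F2.
have : 0 < count (predC (predU bad1 bad2)) (iota 0 N).
  have bad1_le : count bad1 (iota 0 N) <= size F1.
    exact: (count_mem_inj F1 (shift_inj a) (iota_uniq 0 N)).
  have bad2_le : count bad2 (iota 0 N) <= size F2.
    exact: (count_mem_inj F2 (shift_inj b) (iota_uniq 0 N)).
  have := count_predUI bad1 bad2 (iota 0 N).
  have := count_predC (predU bad1 bad2) (iota 0 N).
  by rewrite size_iota; lia.
rewrite -has_count => /hasP[k]; rewrite mem_iota add0n => /andP[_ k_lt_N].
by rewrite /= negb_or => /andP[not_bad1 not_bad2]; exists k.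
Qed.

Lemma leq_sum_outside (T : finType) (f g : T -> nat) (s : seq T) : uniq s ->
  (forall v, v \notin s -> f v <= g v) -> \sum_(v <- s) f v <= \sum_(v <- s) g v ->
  \sum_v f v <= \sum_v g v.
Proof.
move=> s_uniq f_le_out f_le_in.
rewrite [leqLHS](bigID (mem s)) [leqRHS](bigID (mem s)) /= -!big_uniq //.
by apply: leq_add => //; apply: leq_sum => v; apply: f_le_out.
Qed.

Lemma sorted_index_gt (T : eqType) (h : T -> nat) (s : seq T) (x y : T) :
  sorted (fun a b => h b <= h a) s -> x \in s -> y \in s -> h x < h y -> index y s < index x s.
Proof.
move=> s_sorted x_s y_s h_lt; rewrite ltnNge; apply: contraL h_lt => idx_le.
have h_trans : transitive (fun a b => h b <= h a).
  by move=> a b c h_ba h_cb; apply: leq_trans h_cb h_ba.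
by rewrite -leqNgt (sorted_leq_index h_trans (fun a => leqnn (h a)) s_sorted _ _ x_s y_s).
Qed.

Section Walks.

Variables (T : finType) (e : rel T).

Lemma walk_steps_cat (u0 : T) (s1 s2 : seq T) :
  walk_steps u0 (s1 ++ s2) = walk_steps u0 s1 ++ walk_steps (last u0 s1) s2.
Proof. by elim: s1 u0 => //= x s1 IH u0; rewrite /walk_steps /= -IH. Qed.

Lemma size_walk_steps (u0 : T) (s : seq T) : size (walk_steps u0 s) = size s.
Proof. by rewrite size2_zip //= leqnSn. Qed.

Lemma splice_closed_walk (u0 x : T) (s c : seq T) :
  x \in u0 :: s -> path e u0 s -> path e x c -> last x c = x ->
  exists s', [/\ path e u0 s', {subset u0 :: s <= u0 :: s'} &
    perm_eq (walk_steps u0 s') (walk_steps u0 s ++ walk_steps x c)].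
Proof.
case/splitPl=> s1 s2 last_s1; rewrite cat_path last_s1 => /andP[path_s1 path_s2] path_c last_c.
exists (s1 ++ c ++ s2); split.
- by rewrite cat_path last_s1 path_s1 cat_path path_c last_c.
- by move=> v; rewrite !(inE, mem_cat) => /or3P[| |] ->; rewrite ?orbT.
- by rewrite !walk_steps_cat last_s1 last_c -catA perm_cat2l perm_catC.
Qed.

Lemma splice_closed_walks (u0 : T) (s : seq T) (c : T -> seq T) (vs : seq T) :
  {subset vs <= u0 :: s} -> path e u0 s ->
  (forall v, path e v (c v)) -> (forall v, last v (c v) = v) ->
  exists2 s', path e u0 s' &
    perm_eq (walk_steps u0 s') (walk_steps u0 s ++ flatten [seq walk_steps v (c v) | v <- vs]).
Proof.
move=> + + path_c last_c; elim: vs s => [|v vs IH] s vs_sub path_s.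
  by exists s; rewrite ?cats0.
have [s1 [path_s1 sub_s1 perm_s1]] :=
  splice_closed_walk (vs_sub v (mem_head v vs)) path_s (path_c v) (last_c v).
have [|s' path_s' perm_s'] := IH s1 _ path_s1.
  by move=> x x_vs; apply/sub_s1/vs_sub; rewrite inE x_vs orbT.
by exists s' => //; apply: (perm_trans perm_s'); rewrite /= catA perm_cat2r.
Qed.

Definition detour (q v : T) (k : nat) : seq T := iter k (fun s => q :: v :: s) [::].

Lemma path_detour (q v : T) (k : nat) : e v q -> e q v -> path e v (detour q v k).
Proof. by move=> e_vq e_qv; elim: k => //= k ->; rewrite e_vq e_qv. Qed.

Lemma last_detour (q v : T) (k : nat) : last v (detour q v k) = v.
Proof. by elim: k. Qed.

Lemma count_walk_steps_detour (P : pred (T * T)) (q v : T) (k : nat) :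
  count P (walk_steps v (detour q v k)) = k * count P [:: (v, q); (q, v)].
Proof. by elim: k => //= k IH; rewrite /walk_steps /= in IH *; rewrite IH; lia. Qed.

End Walks.

Section DetourDegrees.

Variables (T : finType) (base : T -> nat) (p : T -> T).

(* Degrees in G + W after splicing in K v detours v -> p v -> v for every v,
   where base gives the degrees in G + W. *)
Definition detour_deg (K : T -> nat) (x : T) : nat :=
  base x + 2 * \sum_v K v * ((x == v) || (x == p v)).

Lemma detour_deg_upd (K : T -> nat) (v : T) (k : nat) (x : T) : K v = 0 ->
  detour_deg [eta K with v |-> k] x = detour_deg K x + 2 * k * ((x == v) || (x == p v)).
Proof.
move=> Kv0; rewrite /detour_deg (bigD1 v) //= eqxx [in RHS](bigD1 v) //= Kv0 mul0n add0n.
rewrite (eq_bigr (fun y => K y * ((x == y) || (x == p y)))); first by lia.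
by move=> y /negbTE ->.
Qed.

Lemma detour_deg_upd_self (K : T -> nat) (v : T) (k : nat) :
  K v = 0 -> detour_deg [eta K with v |-> k] v = detour_deg K v + 2 * k.
Proof. by move=> Kv0; rewrite detour_deg_upd // eqxx muln1. Qed.

Lemma detour_deg_upd_parent (K : T -> nat) (v : T) (k : nat) :
  K v = 0 -> detour_deg [eta K with v |-> k] (p v) = detour_deg K (p v) + 2 * k.
Proof. by move=> Kv0; rewrite detour_deg_upd // eqxx orbT muln1. Qed.

Lemma detour_deg_upd_other (K : T -> nat) (v : T) (k : nat) (x : T) :
  K v = 0 -> x != v -> x != p v -> detour_deg [eta K with v |-> k] x = detour_deg K x.
Proof. by move=> Kv0 xv xpv; rewrite detour_deg_upd // (negbTE xv) (negbTE xpv) muln0 addn0. Qed.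

End DetourDegrees.

Section Greedy.

Variables (T : finType) (e : rel T) (key : T -> nat) (base : T -> nat) (p : T -> T).
Hypotheses (e_sym : symmetric e) (e_irr : irreflexive e) (key_inj : injective key).

Definition earlier_nbrs (v : T) : {set T} := [set x | e v x & key x < key v].

Definition proper_below (f : T -> nat) (n : nat) : Prop :=
  forall x y, e x y -> key x < n -> key y < n -> f x != f y.

Local Notation D := (detour_deg base p).

Lemma key_neq (x y : T) : key x != key y -> x != y.
Proof. by apply: contraNneq => ->. Qed.

Lemma proper_below_eq (f g : T -> nat) (n : nat) :
  (forall x, key x < n -> f x = g x) -> proper_below f n -> proper_below g n.
Proof. by move=> fg f_prop x y exy x_lt y_lt; rewrite -!fg //; apply: f_prop. Qed.

Lemma proper_below_skip (f : T -> nat) (n : nat) :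
  (forall v, key v != n) -> proper_below f n -> proper_below f n.+1.
Proof.
move=> no_key f_prop x y exy x_le y_le.
by apply: f_prop; rewrite // ltn_neqAle no_key -ltnS.
Qed.

Lemma proper_below_succ (f : T -> nat) (v : T) (n : nat) : key v = n ->
  proper_below f n -> (forall y, y \in earlier_nbrs v -> f v != f y) -> proper_below f n.+1.
Proof.
move=> <- f_prop v_prop x y exy.
rewrite ltnS leq_eqVlt => /orP[/eqP/key_inj x_v | x_lt].
all: rewrite ltnS leq_eqVlt => /orP[/eqP/key_inj y_v | y_lt].
- by subst; rewrite e_irr in exy.
- by subst x; apply: v_prop; rewrite inE exy y_lt.
- by subst y; rewrite eq_sym; apply: v_prop; rewrite inE e_sym exy x_lt.
- exact: f_prop.
Qed.

Lemma greedy_below (n : nat) : (forall v, key v < n -> key v < key (p v)) ->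
  exists K : T -> nat, [/\ forall v, n <= key v -> K v = 0,
    forall v, K v <= #|earlier_nbrs v| & proper_below (D K) n].
Proof.
elim: n => [_ | n IH key_p]; first by exists (fun=> 0).
have [K [K0 K_le K_prop]] := IH (fun v v_lt => key_p v (ltnW v_lt)).
have [v /eqP key_v | no_key] := pickP (fun v => key v == n); last first.
  exists K; split=> //; first by move=> v /ltnW; apply: K0.
  by apply: proper_below_skip => // v; rewrite no_key.
have Kv0 : K v = 0 by apply: K0; rewrite key_v.
have v_lt_pv : key v < key (p v) by apply: key_p; rewrite key_v.
set F := [seq D K x | x <- enum (earlier_nbrs v)].
have [k [k_le k_avoid _]] := exists_shift_avoiding (D K v) 0 F [::] (isT : 0 < 2).
rewrite size_map -cardE addn0 in k_le.
have D_old x : key x < n -> D K x = D [eta K with v |-> k] x.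
  move=> x_lt; rewrite detour_deg_upd_other //; apply: key_neq; lia.
exists [eta K with v |-> k]; split.
- by move=> x x_ge /=; case: eqP => [x_v | _]; [move: x_ge; rewrite x_v key_v ltnn | apply/K0/ltnW].
- by move=> x /=; case: eqP => [-> | _].
- apply: (proper_below_succ key_v) (proper_below_eq D_old K_prop) _ => y.
  rewrite inE => /andP[e_vy y_lt]; rewrite detour_deg_upd_self // -D_old; last by rewrite -key_v.
  by apply: contra k_avoid => /eqP ->; apply: map_f; rewrite mem_enum inE e_vy y_lt.
Qed.

Variables (w u r : T) (N : nat).
Hypotheses (key_w : key w = N) (key_u : key u = N.+1) (key_r : key r = N.+2).
Hypotheses (key_lt : forall v, key v < N.+3) (key_p : forall v, v != r -> key v < key (p v)).
Hypotheses (p_w : p w = u) (p_u : p u = r) (e_ur : e u r).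

Lemma greedy_upto_w : exists K : T -> nat, [/\ forall v, N < key v -> K v = 0,
    forall v, v != w -> K v <= #|earlier_nbrs v|, K w <= #|earlier_nbrs w|.+1,
    proper_below (D K) N.+1 & D K u != D K r].
Proof.
have [K [K0 K_le K_prop]] : exists K : T -> nat, [/\ forall v, N <= key v -> K v = 0,
    forall v, K v <= #|earlier_nbrs v| & proper_below (D K) N].
  by apply: greedy_below => v v_lt; apply/key_p/key_neq; rewrite key_r; lia.
have Kw0 : K w = 0 by apply: K0; rewrite key_w.
set F := [seq D K x | x <- enum (earlier_nbrs w)].
have [k [k_le k_avoid k_ur]] := exists_shift_avoiding (D K w) (D K u) F [:: D K r] (isT : 0 < 2).
rewrite size_map -cardE addn1 in k_le; rewrite mem_seq1 in k_ur.
have D_old x : key x != N -> key x != N.+1 -> D K x = D [eta K with w |-> k] x.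
  by move=> x_w x_u; rewrite detour_deg_upd_other // ?p_w key_neq ?key_w ?key_u.
exists [eta K with w |-> k]; split.
- by move=> x x_gt /=; case: eqP => [x_w | _]; [move: x_gt; rewrite x_w key_w ltnn | apply/K0/ltnW].
- by move=> x /= /negbTE ->.
- by rewrite /= eqxx.
- apply: (proper_below_succ key_w) (proper_below_eq _ K_prop) _ => [x x_lt | y].
    by apply: D_old; lia.
  rewrite inE key_w => /andP[e_wy y_lt]; rewrite detour_deg_upd_self // -D_old; [|lia..].
  by apply: contra k_avoid => /eqP ->; apply: map_f; rewrite mem_enum inE e_wy key_w y_lt.
- rewrite -(D_old r); [|rewrite key_r; lia..].
  by rewrite -{1}p_w detour_deg_upd_parent // p_w.
Qed.

Lemma greedy_cherry : exists K : T -> nat,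
  \sum_v K v <= \sum_v #|earlier_nbrs v| /\ forall x y, e x y -> D K x != D K y.
Proof.
have [K [K0 K_le Kw_le K_prop K_ur]] := greedy_upto_w.
have [wu wr ru] : [/\ w != u, w != r & r != u].
  by split; apply: key_neq; rewrite ?key_w ?key_u ?key_r; lia.
have Ku0 : K u = 0 by apply: K0; rewrite key_u.
have Kr0 : K r = 0 by apply: K0; rewrite key_r.
set Fu := [seq D K x | x <- enum (earlier_nbrs u)].
set Fr := [seq D K x | x <- enum (earlier_nbrs r :\ u)].
have [k [k_le k_avoid_u k_avoid_r]] := exists_shift_avoiding (D K u) (D K r) Fu Fr (isT : 0 < 2).
rewrite !size_map -!cardE in k_le.
have D_old x : key x < N.+1 -> D K x = D [eta K with u |-> k] x.
  by move=> x_lt; rewrite detour_deg_upd_other // ?p_u key_neq ?key_u ?key_r; lia.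
have D_u : D [eta K with u |-> k] u = D K u + 2 * k by apply: detour_deg_upd_self.
have D_r : D [eta K with u |-> k] r = D K r + 2 * k by rewrite -p_u detour_deg_upd_parent.
exists [eta K with u |-> k]; split.
- apply: (leq_sum_outside (s := [:: w; u; r])).
  + by rewrite /= !inE negb_or wu wr (eq_sym u) ru.
  + by move=> v; rewrite !inE !negb_or => /and3P[vw vu _] /=; rewrite (negbTE vu) K_le.
  have u_earlier_r : u \in earlier_nbrs r by rewrite inE e_sym e_ur key_u key_r ltnSn.
  rewrite !big_cons !big_nil /= (negbTE wu) eqxx (negbTE ru) Kr0.
  rewrite (cardsD1 u (earlier_nbrs r)) u_earlier_r.
  lia.
- move=> x y exy; apply: (proper_below_succ key_r) exy (key_lt x) (key_lt y) => [|z].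
    apply: (proper_below_succ key_u) (proper_below_eq D_old K_prop) _ => z.
    rewrite inE => /andP[e_uz z_lt]; rewrite D_u -D_old -?key_u //.
    by apply: contra k_avoid_u => /eqP ->; apply: map_f; rewrite mem_enum inE e_uz z_lt.
  rewrite inE => /andP[e_rz z_lt]; rewrite D_r.
  have [-> | z_u] := eqVneq z u; first by rewrite D_u eqn_add2r eq_sym.
  have z_le : key z < N.+1.
    by move: z_lt; rewrite key_r ltnS leq_eqVlt -key_u (inj_eq key_inj) (negbTE z_u).
  rewrite -D_old //; apply: contra k_avoid_r => /eqP ->; apply: map_f.
  by rewrite mem_enum !inE z_u e_rz z_lt.
Qed.

End Greedy.

Lemma nedges_earlier (T : finType) (e : rel T) (key : T -> nat) :
  symmetric e -> irreflexive e -> injective key -> nedges e = \sum_v #|earlier_nbrs e key v|.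
Proof.
move=> e_sym e_irr key_inj.
have earlier_sum : \sum_v #|earlier_nbrs e key v| =
    \sum_(x : T * T | e x.1 x.2 && (key x.2 < key x.1)) 1.
  rewrite (eq_bigr (fun v => \sum_(y | e v y && (key y < key v)) 1)) => [|v _].
    by rewrite pair_big_dep.
  by rewrite sum1dep_card.
have swap_inj : injective (fun x : T * T => (x.2, x.1)) by move=> [? ?] [? ?] [-> ->].
rewrite /nedges -sum1dep_card (bigID (fun x => key x.2 < key x.1)) /= -earlier_sum.
rewrite (eq_bigl (fun x => e x.2 x.1 && (key x.1 < key x.2))) => [|x].
  by rewrite (reindex_inj swap_inj) /= -earlier_sum addnn -mul2n mulKn.
rewrite e_sym -leqNgt leq_eqVlt (inj_eq key_inj).
by have [-> | _] := eqVneq x.1 x.2; rewrite ?e_irr.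
Qed.

Section Reachability.

Variables (T : finType) (e : rel T).

Fixpoint ball (u : T) (k : nat) : {set T} :=
  if k is k'.+1 then ball u k' :|: [set y | [exists x in ball u k', e x y]] else [set u].

Lemma last_path_ball (u : T) (q : seq T) : path e u q -> last u q \in ball u (size q).
Proof.
elim/last_ind: q => [_ | q y IH]; first by rewrite inE.
rewrite rcons_path last_rcons size_rcons => /andP[path_q e_qy] /=.
by rewrite !inE; apply/orP; right; apply/existsP; exists (last u q); rewrite IH.
Qed.

Lemma exists_depth (u : T) : (forall v, connect e u v) ->
  exists h : T -> nat, forall v, v != u -> exists2 x, e x v & h x < h v.
Proof.
move=> u_conn; have in_ball v : exists k, v \in ball u k.
  by case/connectP: (u_conn v) => q path_q ->; exists (size q); apply: last_path_ball.
exists (fun v => ex_minn (in_ball v)) => v v_u.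
case: ex_minnP => [[|d] v_in d_min].
  by move: v_in v_u; rewrite inE => ->.
move: v_in; rewrite inE => /orP[v_in | ].
  by have := d_min d v_in; rewrite ltnn.
rewrite inE => /existsP[x /andP[x_in e_xv]]; exists x => //.
by case: ex_minnP => dx _ dx_min; apply: leq_ltn_trans (dx_min d x_in) _.
Qed.

End Reachability.

Lemma connected_maxdeg1_K2 (T : finType) (e : rel T) (a b : T) :
  symmetric e -> irreflexive e -> connected_graph e -> e a b ->
  (forall u w r, e u w -> e u r -> w = r) -> isK2 e.
Proof.
move=> e_sym e_irr conn e_ab maxdeg1; split; last by exists a, b.
have closed_ab q x : x \in [set a; b] -> path e x q -> last x q \in [set a; b].
  elim: q x => //= y q IH x x_ab /andP[e_xy path_q]; apply: IH path_q.
  rewrite !inE; case/set2P: x_ab => x_eq; subst x.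
    by rewrite (maxdeg1 _ _ _ e_xy e_ab) eqxx orbT.
  have e_ba : e b a by rewrite e_sym.
  by rewrite (maxdeg1 _ _ _ e_xy e_ba) eqxx.
have all_ab : [set a; b] = [set: T].
  apply/setP => v; rewrite in_setT; case/connectP: (conn a v) => q path_q ->.
  by apply: (closed_ab _ _ _ path_q); rewrite !inE eqxx.
have a_b : a != b by apply: contraTneq e_ab => ->; rewrite e_irr.
by rewrite -cardsT -all_ab cards2 a_b.
Qed.

Lemma nice_cherry (T : finType) (e : rel T) (a b : T) :
  symmetric e -> irreflexive e -> nice e -> e a b ->
  exists u w r, [/\ e u w, e u r & w != r].
Proof.
move=> e_sym e_irr [conn not_K2] e_ab.
case: (boolP [exists u, exists w, exists r, [&& e u w, e u r & w != r]]).
  by move=> /existsP[u /existsP[w /existsP[r /and3P[e_uw e_ur w_r]]]]; exists u, w, r.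
move=> /existsPn no_cherry; case: not_K2.
apply: (connected_maxdeg1_K2 e_sym e_irr conn e_ab) => u w r e_uw e_ur.
apply/eqP; apply: contraTT (no_cherry u) => w_r; rewrite negbK.
by apply/existsP; exists w; apply/existsP; exists r; rewrite e_uw e_ur w_r.
Qed.

Section CherryOrder.

Variables (T : finType) (e : rel T) (h : T -> nat) (w u r : T).
Hypotheses (e_sym : symmetric e) (e_irr : irreflexive e).
Hypotheses (e_uw : e u w) (e_ur : e u r) (w_r : w != r).
Hypothesis h_desc : forall v, v != u -> exists2 x, e x v & h x < h v.

(* Every vertex precedes its parent: first the others by decreasing depth h,
   then w, u, r. *)
Definition cherry_prefix : seq T :=
  [seq v <- sort (fun a b => h b <= h a) (enum T) | v \notin [:: w; u; r]].

Definition cherry_key (v : T) : nat := index v (cherry_prefix ++ [:: w; u; r]).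

Definition cherry_parent (v : T) : T :=
  if v == w then u else if v == u then r else if v == r then u
  else odflt v [pick x | e v x & h x < h v].

Local Notation N := (size cherry_prefix).

Lemma w_u : w != u. Proof. by apply: contraTneq e_uw => ->; rewrite e_irr. Qed.
Lemma u_r : u != r. Proof. by apply: contraTneq e_ur => ->; rewrite e_irr. Qed.

Lemma mem_cherry_prefix (v : T) : (v \in cherry_prefix) = (v \notin [:: w; u; r]).
Proof. by rewrite mem_filter mem_sort mem_enum andbT. Qed.

Lemma cherry_key_prefix (v : T) : v \notin [:: w; u; r] -> cherry_key v = index v cherry_prefix.
Proof. by move=> v_out; rewrite /cherry_key index_cat mem_cherry_prefix v_out. Qed.

Lemma cherry_key_w : cherry_key w = N.
Proof. by rewrite /cherry_key index_cat mem_cherry_prefix !inE eqxx /= eqxx addn0. Qed.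

Lemma cherry_key_u : cherry_key u = N.+1.
Proof.
by rewrite /cherry_key index_cat mem_cherry_prefix !inE eqxx orbT /= (negbTE w_u) eqxx addn1.
Qed.

Lemma cherry_key_r : cherry_key r = N.+2.
Proof.
rewrite /cherry_key index_cat mem_cherry_prefix !inE eqxx !orbT /=.
by rewrite (negbTE w_r) (negbTE u_r) eqxx addn2.
Qed.

Lemma cherry_key_lt (v : T) : cherry_key v < N.+3.
Proof.
have -> : N.+3 = size (cherry_prefix ++ [:: w; u; r]) by rewrite size_cat addn3.
by rewrite index_mem mem_cat mem_cherry_prefix; case: (v \in _).
Qed.

Lemma cherry_key_inj : injective cherry_key.
Proof.
move=> x y; apply: (index_inj x); rewrite mem_cat mem_cherry_prefix; by case: (_ \in _).
Qed.

Lemma cherry_parent_w : cherry_parent w = u.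
Proof. by rewrite /cherry_parent eqxx. Qed.

Lemma cherry_parent_u : cherry_parent u = r.
Proof. by rewrite /cherry_parent eqxx eq_sym (negbTE w_u). Qed.

Lemma cherry_parent_r : cherry_parent r = u.
Proof. by rewrite /cherry_parent eqxx eq_sym (negbTE w_r) eq_sym (negbTE u_r). Qed.

Lemma cherry_parent_out (v : T) : v \notin [:: w; u; r] ->
  e v (cherry_parent v) && (h (cherry_parent v) < h v).
Proof.
move=> v_out; move: (v_out); rewrite !inE !negb_or => /and3P[v_w v_u v_r].
rewrite /cherry_parent (negbTE v_w) (negbTE v_u) (negbTE v_r).
case: pickP => [x // | no_x].
by have [x e_xv h_lt] := h_desc v_u; move: (no_x x); rewrite e_sym e_xv h_lt.
Qed.

Lemma cherry_parent_edge (v : T) : e v (cherry_parent v).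
Proof.
have [v_in | v_out] := boolP (v \in [:: w; u; r]); last by case/andP: (cherry_parent_out v_out).
rewrite !inE in v_in; case/or3P: v_in => /eqP ->.
- by rewrite cherry_parent_w e_sym.
- by rewrite cherry_parent_u.
- by rewrite cherry_parent_r e_sym.
Qed.

Lemma cherry_parent_key (v : T) : v != r -> cherry_key v < cherry_key (cherry_parent v).
Proof.
move=> v_r; have [v_in | v_out] := boolP (v \in [:: w; u; r]).
  rewrite !inE (negbTE v_r) orbF in v_in; case/orP: v_in => /eqP ->.
  - by rewrite cherry_parent_w cherry_key_w cherry_key_u.
  - by rewrite cherry_parent_u cherry_key_u cherry_key_r.
have /andP[e_vx h_lt] := cherry_parent_out v_out.
rewrite cherry_key_prefix //; set x := cherry_parent v in e_vx h_lt *.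
have [x_in | x_out] := boolP (x \in [:: w; u; r]).
  apply: (@leq_trans N); first by rewrite index_mem mem_cherry_prefix.
  by rewrite !inE in x_in; case/or3P: x_in => /eqP ->;
    rewrite ?cherry_key_w ?cherry_key_u ?cherry_key_r // ltnW.
rewrite cherry_key_prefix //; apply: sorted_index_gt h_lt; rewrite ?mem_cherry_prefix //.
apply: sorted_filter; first by move=> a b c h_ba h_cb; apply: leq_trans h_cb h_ba.
by apply: sort_sorted => a b; apply: leq_total.
Qed.

Lemma cherry_detours (base : T -> nat) : exists K : T -> nat, \sum_v K v <= nedges e /\
  forall x y, e x y -> detour_deg base cherry_parent K x != detour_deg base cherry_parent K y.
Proof.
have [K [K_sum K_prop]] := greedy_cherry base e_sym e_irr cherry_key_inj cherry_key_w
  cherry_key_u cherry_key_r cherry_key_lt cherry_parent_key cherry_parent_w cherry_parent_u e_ur.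
by exists K; rewrite (nedges_earlier e_sym e_irr cherry_key_inj).
Qed.

End CherryOrder.

Lemma exists_detour_multiplicities (T : finType) (e : rel T) (base : T -> nat) (a b : T) :
  simple_graph e -> nice e -> e a b ->
  exists (p : T -> T) (K : T -> nat), [/\ forall v, e v (p v), \sum_v K v <= nedges e &
    forall x y, e x y -> detour_deg base p K x != detour_deg base p K y].
Proof.
move=> [e_sym e_irr] e_nice e_ab.
have [u [w [r [e_uw e_ur w_r]]]] := nice_cherry e_sym e_irr e_nice e_ab.
have [h h_desc] := exists_depth (e_nice.1 u).
have [K [K_sum K_prop]] := cherry_detours e_sym e_irr e_uw e_ur w_r h_desc base.
by exists (cherry_parent e h w u r), K; split=> //; apply: cherry_parent_edge.
Qed.

Lemma splice_detours (T : finType) (e : rel T) (u0 : T) (s : seq T) (p : T -> T) (K : T -> nat) :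
  symmetric e -> path e u0 s -> covers_all u0 s -> (forall v, e v (p v)) ->
  exists s', [/\ path e u0 s', size s' = size s + 2 * \sum_v K v &
    forall x, deg_plus e u0 s' x = detour_deg (deg_plus e u0 s) p K x].
Proof.
move=> e_sym path_s cover_s e_p.
have path_c v : path e v (detour (p v) v (K v)) by rewrite path_detour // e_sym.
have [s' path_s' perm_s'] := splice_closed_walks (vs := index_enum T)
  (fun v _ => cover_s v) path_s path_c (fun v => last_detour _ _ _).
have count_s' P : count P (walk_steps u0 s') =
    count P (walk_steps u0 s) + \sum_v K v * count P [:: (v, p v); (p v, v)].
  rewrite (permP perm_s') count_cat count_flatten sumnE !big_map.
  by congr (_ + _); apply: eq_bigr => v _; rewrite count_walk_steps_detour.
exists s'; split=> // [|x].
  rewrite -(size_walk_steps u0 s') -count_predT count_s' count_predT size_walk_steps.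
  by rewrite big_distrr; congr (_ + _); apply: eq_bigr => v _; rewrite mulnC.
rewrite /deg_plus count_s' /detour_deg -addnA big_distrr; congr (_ + (_ + _)).
apply: eq_bigr => v _ /=; rewrite !(eq_sym x) [(p v == x) || _]orbC; lia.
Qed.

Theorem theorem4p1 (T : finType) (e : rel T) (m : nat) (u0 : T) (s : seq T) :
  simple_graph e -> nice e -> nedges e = m ->
  is_walk e u0 s -> closed_walk u0 s -> covers_all u0 s ->
  MLW_le e (walk_length u0 s + 2 * m).
Proof.
(* W need not be closed: the detours are spliced in wherever W passes. *)
move=> e_simple e_nice <- walk_s _ cover_s.
case: (pickP (fun ab : T * T => e ab.1 ab.2)) => [[a b] /= e_ab | no_edge]; last first.
  exists u0, [::]; split=> //; split=> // x y e_xy.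
  by have := no_edge (x, y); rewrite /= e_xy.
have [p [K [e_p K_sum K_prop]]] :=
  exists_detour_multiplicities (deg_plus e u0 s) e_simple e_nice e_ab.
have [s' [walk_s' size_s' deg_s']] := splice_detours K e_simple.1 walk_s cover_s e_p.
exists u0, s'; split; first by split=> // x y e_xy; rewrite !deg_s'; apply/eqP; exact: K_prop.
by rewrite /walk_length size_s' leq_add2l leq_mul2l K_sum orbT.
Qed.
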